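(* For every $d\ge1$, $$\mathrm{dS}^{d,\rm cut}_{\mathbb C}=\{z\in\mathrm{dS}^d_{\mathbb C}\;:\;-iz_0\notin(-\infty,-1]\}.$$
   Context: Let $d\ge1$. On $\mathbb C^{1+d}$, with points $z=(z_0,z_1,\dots,z_d)$ and standard basis $e_0,\dots,e_d$, let $\beta(z,w)=z_0w_0-z_1w_1-\dots-z_dw_d$. Let $V=\mathbb R^{1+d}\subset\mathbb C^{1+d}$ and $V_+=\{x\in V:x_0>0,\ \beta(x,x)>0\}$. Let $\mathrm{dS}^d_{\mathbb C}=\{z:\beta(z,z)=-1\}$ and $\Xi_+=\mathrm{dS}^d_{\mathbb C}\cap(V+iV_+)$. Let $G_{\mathbb C}=\mathrm{SO}_{1+d}(\mathbb C)$ (determinant-one complex linear maps preserving $\beta$) and $K_{\mathbb C}=\{g\in G_{\mathbb C}:ge_0=e_0\}$. Let $h(z_0,z_1,z_2,\dots)=(z_1,z_0,0,\dots,0)$, $\mathcal S_{\pm\pi/2}=\{\zeta\in\mathbb C:|\mathrm{Im}\,\zeta|<\pi/2\}$ and $\Xi_{A_{\mathbb C}}=\exp(\mathcal S_{\pm\pi/2}h)\subset G_{\mathbb C}$. The cut domain is defined as $\mathrm{dS}^{d,\rm cut}_{\mathbb C}:=K_{\mathbb C}\,\Xi_{A_{\mathbb C}}.\Xi_+=\{ka.w: k\in K_{\mathbb C},a\in\Xi_{A_{\mathbb C}},w\in\Xi_+\}$. *)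

From HB Require Import structures.
From mathcomp Require Import all_boot all_order all_algebra.
From mathcomp Require Import reals.
From mathcomp.analysis Require Import sequences trigo exp.
From mathcomp Require Import complex.
Set Implicit Arguments. Unset Strict Implicit. Unset Printing Implicit Defensive.
Import Order.TTheory GRing.Theory Num.Theory.
Local Open Scope ring_scope.
Local Open Scope complex_scope.

Section Defs.
Variable R : realType.
Local Notation C := R[i].

Definition cexp (z : C) : C :=
  (expR (complex.Re z))%:C * ((cos (complex.Im z)) +i* (sin (complex.Im z))).
Definition ccosh (z : C) : C := (cexp z + cexp (- z)) / 2%:R.
Definition csinh (z : C) : C := (cexp z - cexp (- z)) / 2%:R.

Variable d : nat.
(* C^{1+d} as column vectors indexed by 'I_(d.+1); index 0 is z_0 *)
Definition vec := 'cV[C]_(d.+1).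
Definition i0 : 'I_(d.+1) := ord0.
Definition i1 : 'I_(d.+1) := inord 1.

Definition beta (z w : vec) : C :=
  z i0 0 * w i0 0 - \sum_(j < d.+1 | j != i0) z j 0 * w j 0.

Definition e0 : vec := \col_j (if j == i0 then 1 else 0).

Definition VplusR (x : 'I_(d.+1) -> R) : Prop :=
  0 < x i0 /\ 0 < x i0 ^+ 2 - \sum_(j < d.+1 | j != i0) x j ^+ 2.

Definition dSC (z : vec) : Prop := beta z z = -1.

Definition Xiplus (z : vec) : Prop :=
  dSC z /\ VplusR (fun j => complex.Im (z j 0)).

Definition GC (g : 'M[C]_(d.+1)) : Prop :=
  \det g = 1 /\ forall z w : vec, beta (g *m z) (g *m w) = beta z w.

Definition KC (g : 'M[C]_(d.+1)) : Prop := GC g /\ g *m e0 = e0.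

Definition hmx : 'M[C]_(d.+1) :=
  \matrix_(j, k) (if ((j == i0) && (k == i1)) || ((j == i1) && (k == i0))
                  then 1 else 0).

(* exp(zeta h) = 1 + sinh(zeta) h + (cosh(zeta) - 1) h^2, the closed form of
   the exponential series since h^3 = h. *)
Definition exph (zeta : C) : 'M[C]_(d.+1) :=
  1%:M + csinh zeta *: hmx + (ccosh zeta - 1) *: (hmx *m hmx).

Definition stripS (zeta : C) : Prop := `|complex.Im zeta| < pi / 2%:R.

Definition XiAC (a : 'M[C]_(d.+1)) : Prop :=
  exists zeta, stripS zeta /\ a = exph zeta.

Definition dScut (z : vec) : Prop :=
  exists k a w, KC k /\ XiAC a /\ Xiplus w /\ z = k *m (a *m w).

Definition dScut_rhs (z : vec) : Prop :=
  dSC z /\ ~ (exists t : R, t <= -1 /\ - 'i * z i0 0 = t%:C).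

End Defs.

(* Inclusion from left to right: write zeta = a + i b with |b| < pi/2, so that
   exp(zeta h) = exp(i b h) exp(a h).  The real boost exp(a h) maps Xi_+ to itself
   and every k in K_C fixes z_0, so it suffices that z = exp(i b h) w with w in Xi_+
   never has z_0 = i t with t <= -1.  Solving w = exp(-i b h) z, the conditions
   Im w in V_+ and beta(z, z) = -1 force the real and imaginary parts x, y of
   (z_2, ..., z_d) to satisfy |x|^2 |y|^2 < (x.y)^2, against Cauchy-Schwarz.

   Inclusion from right to left: products of two reflections in vectors orthogonal
   to e_0 lie in K_C, and they act transitively on the points with prescribed z_0
   and prescribed q = z_1^2 + ... + z_d^2 <> 0.  So z can be moved into the
   (z_0, z_1)-plane, where exp(i theta h) z lands in Xi_+ for a suitable theta as
   soon as -i z_0 is not in (-oo, -1].  If q = 0 then z_0 = i, and z either lies in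
   that plane or is moved onto an explicit point of Xi_+ with z_0 = i. *)

From HB Require Import structures.
From mathcomp Require Import all_boot all_order all_algebra.
From mathcomp Require Import reals.
From mathcomp.analysis Require Import sequences trigo exp.
From mathcomp Require Import complex.
From mathcomp.algebra_tactics Require Import ring lra.
Import Order.TTheory GRing.Theory Num.Theory.
Local Open Scope ring_scope.
Local Open Scope complex_scope.
Set Implicit Arguments. Unset Strict Implicit. Unset Printing Implicit Defensive.

Section RealInequalities.
Variable R : realFieldType.

Lemma sqr_sum_mul_le (I : finType) (A : pred I) (f g : I -> R) :
  (\sum_(i | A i) f i * g i) ^+ 2
    <= (\sum_(i | A i) f i ^+ 2) * (\sum_(i | A i) g i ^+ 2).
Proof.
set X := \sum_(i | A i) f i ^+ 2; set Y := \sum_(i | A i) g i ^+ 2.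
set P := \sum_(i | A i) f i * g i.
have lagrange : X * Y + X * Y - 2 * P ^+ 2
    = \sum_(i | A i) \sum_(j | A j) (f i * g j - f j * g i) ^+ 2.
  have XYE : X * Y = \sum_(i | A i) \sum_(j | A j) f i ^+ 2 * g j ^+ 2.
    by rewrite mulr_suml; apply: eq_bigr => i _; rewrite mulr_sumr.
  have YXE : X * Y = \sum_(i | A i) \sum_(j | A j) f j ^+ 2 * g i ^+ 2.
    rewrite mulrC mulr_suml; apply: eq_bigr => i _.
    by rewrite mulr_sumr; apply: eq_bigr => j _; rewrite mulrC.
  have PPE : P ^+ 2 = \sum_(i | A i) \sum_(j | A j) (f i * g i) * (f j * g j).
    by rewrite expr2 mulr_suml; apply: eq_bigr => i _; rewrite mulr_sumr.
  rewrite {1}XYE YXE PPE mulr_sumr -big_split -sumrB /=.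
  apply: eq_bigr => i _; rewrite mulr_sumr -big_split -sumrB /=.
  by apply: eq_bigr => j _; ring.
have : 0 <= X * Y + X * Y - 2 * P ^+ 2.
  by rewrite lagrange; apply: sumr_ge0 => i _; apply: sumr_ge0 => j _; apply: sqr_ge0.
lra.
Qed.

Lemma lightcone_boost (ch sh y0 y1 Y : R) :
  ch ^+ 2 - sh ^+ 2 = 1 -> 0 < ch -> 0 <= Y -> 0 < y0 -> y1 ^+ 2 + Y < y0 ^+ 2 ->
  0 < ch * y0 + sh * y1 /\ (sh * y0 + ch * y1) ^+ 2 + Y < (ch * y0 + sh * y1) ^+ 2.
Proof.
move=> hcs hch hY hy0 hV.
have e : (ch * y0 + sh * y1) ^+ 2 - (sh * y0 + ch * y1) ^+ 2
    = (ch ^+ 2 - sh ^+ 2) * (y0 ^+ 2 - y1 ^+ 2) by ring.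
rewrite hcs mul1r in e; split; last by lra.
have : (sh * y1) ^+ 2 < (ch * y0) ^+ 2.
  rewrite !exprMn; have -> : ch ^+ 2 = 1 + sh ^+ 2 by lra.
  have : y1 ^+ 2 < y0 ^+ 2 by lra.
  have := sqr_ge0 sh; nra.
have := mulr_gt0 hch hy0; nra.
Qed.

(* u_0 = X + i Y and u_1 = P + i Q with u_0^2 - u_1^2 = -1; for t = tan theta the
   conclusion says that exp(i theta h) u lies in Xi_+. *)
Lemma plane_slope (X Y P Q : R) :
  X ^+ 2 - Y ^+ 2 - (P ^+ 2 - Q ^+ 2) = -1 -> X * Y - P * Q = 0 ->
  ~ (X = 0 /\ Y <= -1) ->
  exists t, 0 < Y + t * P /\ (Q + t * X) ^+ 2 < (Y + t * P) ^+ 2.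
Proof.
move=> hre him hcut.
set a := X - P; set b := Y - Q; set g := X + P; set h := Y + Q.
(* (a + i b) (g + i h) = (u_0 - u_1) (u_0 + u_1) = -1 *)
have eag : a * g - b * h = -1 by rewrite /a /b /g /h; lra.
have eah : a * h + b * g = 0 by rewrite /a /b /g /h; lra.
have [t ht] : exists t, 0 < b - t * a.
  have [b_gt0|b_le0] := ltP 0 b; first by exists 0; rewrite mul0r subr0.
  have a_neq0 : a != 0.
    apply/eqP => a0; apply: hcut; rewrite a0 mul0r in eag eah.
    have bh : b * h = 1 by lra.
    have bg : b * g = 0 by lra.
    have g0 : g = 0 by rewrite -[g]mulr1 -bh mulrA (mulrC g) bg mul0r.
    have h_lt0 : h < 0 by nra.
    split; first by move: g0 a0; rewrite /g /a; lra.
    have bh_sqr : 4 <= (b + h) ^+ 2.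
      have -> : (b + h) ^+ 2 = (b - h) ^+ 2 + 4 * (b * h) by ring.
      by rewrite bh mulr1 lerDr sqr_ge0.
    have : b + h <= -2 by nra.
    by rewrite /b /h; lra.
  by exists ((b - 1) / a); rewrite divfK //; lra.
have N_gt0 : 0 < a ^+ 2 + b ^+ 2.
  have [a0|a_neq0] := eqVneq a 0.
    by rewrite a0 mulr0 subr0 in ht; rewrite a0; nra.
  have := sqr_ge0 b; have : 0 < a ^+ 2 by rewrite exprn_even_gt0.
  lra.
have hgt : (h + t * g) * (a ^+ 2 + b ^+ 2) = b - t * a.
  transitivity (a * (a * h + b * g) - b * (a * g - b * h)
                + t * (a * (a * g - b * h) + b * (a * h + b * g))); first by ring.
  by rewrite eag eah; ring.
have hg_gt0 : 0 < h + t * g by nra.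
exists t; split; first by rewrite /b /h /g /a in ht hg_gt0 *; lra.
rewrite -subr_gt0.
have -> : (Y + t * P) ^+ 2 - (Q + t * X) ^+ 2 = (h + t * g) * (b - t * a).
  by rewrite /h /g /b /a; ring.
exact: mulr_gt0.
Qed.

(* (c, s) = (cos b, sin b); z_0 = i t and z_1 = p + i q for z = exp(i b h) w; X, Y, P
   are the sums of (Re z_j)^2, (Im z_j)^2, Re z_j Im z_j over j >= 2.  The hypotheses
   say that Im w lies in V_+ and that beta(z, z) = -1. *)
Lemma rotation_cut_absurd (c s t p q X Y P : R) :
  c ^+ 2 + s ^+ 2 = 1 -> 0 < c -> t <= -1 ->
  0 <= X -> 0 <= Y -> P ^+ 2 <= X * Y ->
  0 < c * t - s * p -> (c * q) ^+ 2 + Y < (c * t - s * p) ^+ 2 ->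
  p ^+ 2 - q ^+ 2 + X - Y = 1 - t ^+ 2 -> p * q + P = 0 -> False.
Proof.
move=> hcs hc ht hX hY hCS hy0 hV hre him.
have ct_lt0 : c * t < 0 by nra.
have y0_sqr : (c * t - s * p) ^+ 2 < (s * p) ^+ 2 by nra.
have Y_lt : Y < s ^+ 2 * p ^+ 2 - c ^+ 2 * q ^+ 2.
  by rewrite exprMn in y0_sqr; rewrite exprMn in hV; lra.
have X_lt : X < s ^+ 2 * q ^+ 2 - c ^+ 2 * p ^+ 2.
  have -> : s ^+ 2 = 1 - c ^+ 2 by lra.
  nra.
have XY_lt : X * Y < (s ^+ 2 * q ^+ 2 - c ^+ 2 * p ^+ 2) * (s ^+ 2 * p ^+ 2 - c ^+ 2 * q ^+ 2).
  by nra.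
have e : (s ^+ 2 * q ^+ 2 - c ^+ 2 * p ^+ 2) * (s ^+ 2 * p ^+ 2 - c ^+ 2 * q ^+ 2)
    = (p * q) ^+ 2 * (c ^+ 2 + s ^+ 2) ^+ 2 - (s * c * (p ^+ 2 + q ^+ 2)) ^+ 2.
  by ring.
rewrite e hcs expr1n mulr1 in XY_lt.
have : (p * q) ^+ 2 = P ^+ 2 by rewrite -sqrrN; congr (_ ^+ 2); lra.
nra.
Qed.

End RealInequalities.

Lemma det_1_add_mul (F : comNzRingType) n (u : 'cV[F]_n) (v : 'rV[F]_n) :
  \det (1%:M + u *m v) = 1 + (v *m u) 0 0.
Proof.
have E : block_mx 1%:M 0 v 1%:M *m block_mx 1%:M (- u) 0 (1%:M + v *m u)
       = block_mx (1%:M + u *m v) (- u) 0 1%:M *m block_mx 1%:M 0 v 1%:M.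
  rewrite !mulmx_block !mul1mx !mulmx1 !mul0mx !mulmx0 !addr0 !add0r.
  by rewrite mulmxN mulNmx addrK addrCA addNr addr0.
have := congr1 determinant E.
rewrite !det_mulmx !(@det_lblock _ n 1) !(@det_ublock _ n 1) !det1 !mul1r !mulr1.
by move=> <-; rewrite det_mx11 !mxE.
Qed.

Section Hyperbolic.
Variable R : realType.
Local Notation C := R[i].
Local Notation Re := (@complex.Re R).
Local Notation Im := (@complex.Im R).

Lemma cexpE (a b : R) : cexp (a +i* b) = (expR a * cos b) +i* (expR a * sin b).
Proof. by rewrite /cexp /=; simpc. Qed.

Lemma cexpD (x y : C) : cexp (x + y) = cexp x * cexp y.
Proof.
case: x y => [a b] [a' b']; rewrite !cexpE expRD cosD sinD; simpc.
by congr (_ +i* _); ring.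
Qed.

Lemma cexp0 : cexp (0 : C) = 1.
Proof. by rewrite cexpE expR0 cos0 sin0 !mul1r. Qed.

Lemma cexp_mulN (x : C) : cexp x * cexp (- x) = 1.
Proof. by rewrite -cexpD subrr cexp0. Qed.

Lemma ccoshD (x y : C) : ccosh (x + y) = ccosh x * ccosh y + csinh x * csinh y.
Proof. by rewrite /ccosh /csinh opprD !cexpD; field. Qed.

Lemma csinhD (x y : C) : csinh (x + y) = csinh x * ccosh y + ccosh x * csinh y.
Proof. by rewrite /ccosh /csinh opprD !cexpD; field. Qed.

Lemma ccosh0 : ccosh (0 : C) = 1.
Proof. by rewrite /ccosh oppr0 cexp0; field. Qed.

Lemma csinh0 : csinh (0 : C) = 0.
Proof. by rewrite /csinh oppr0 subrr mul0r. Qed.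

Lemma ccosh_sqrB_csinh (x : C) : ccosh x ^+ 2 - csinh x ^+ 2 = 1.
Proof. by rewrite /ccosh /csinh -[RHS](cexp_mulN x); field. Qed.

Definition cosh (a : R) : R := (expR a + expR (- a)) / 2.
Definition sinh (a : R) : R := (expR a - expR (- a)) / 2.

Lemma ccosh_real (a : R) : ccosh a%:C = (cosh a)%:C.
Proof.
rewrite /ccosh /cosh -rmorphN /= !cexpE cos0 sin0 !mulr1 !mulr0.
by simpc; congr (_ +i* _); field.
Qed.

Lemma csinh_real (a : R) : csinh a%:C = (sinh a)%:C.
Proof.
rewrite /csinh /sinh -rmorphN /= !cexpE cos0 sin0 !mulr1 !mulr0.
by simpc; congr (_ +i* _); field.
Qed.

Lemma cosh_gt0 (a : R) : 0 < cosh a.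
Proof. by rewrite /cosh divr_gt0 ?addr_gt0 ?expR_gt0. Qed.

Lemma cosh_sqrB_sinh (a : R) : cosh a ^+ 2 - sinh a ^+ 2 = 1.
Proof.
have e : expR a * expR (- a) = 1 by rewrite -expRD subrr expR0.
by rewrite /cosh /sinh -[RHS]e; field.
Qed.

Lemma ccosh_imag (t : R) : ccosh ('i * t%:C) = (cos t)%:C.
Proof.
have -> : 'i * t%:C = 0 +i* t by simpc.
rewrite /ccosh; have -> : - (0 +i* t) = 0 +i* (- t) :> C by simpc.
rewrite !cexpE expR0 cosN sinN !mul1r; simpc.
by congr (_ +i* _); field.
Qed.

Lemma csinh_imag (t : R) : csinh ('i * t%:C) = 'i * (sin t)%:C.
Proof.
have -> : 'i * t%:C = 0 +i* t by simpc.
rewrite /csinh; have -> : - (0 +i* t) = 0 +i* (- t) :> C by simpc.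
rewrite !cexpE expR0 cosN sinN !mul1r; simpc.
by congr (_ +i* _); field.
Qed.

Lemma sumcE (I : finType) (P : pred I) (F : I -> C) :
  \sum_(i | P i) F i = (\sum_(i | P i) Re (F i)) +i* (\sum_(i | P i) Im (F i)).
Proof.
apply: (big_rec3 (fun a b c => a = b +i* c)) => // i y1 y2 y3 _ ->.
by case: (F i).
Qed.

Lemma sumc_mulE (I : finType) (P : pred I) (F : I -> C) :
  \sum_(i | P i) F i * F i = (\sum_(i | P i) Re (F i) ^+ 2 - \sum_(i | P i) Im (F i) ^+ 2)
                              +i* (2 * \sum_(i | P i) Re (F i) * Im (F i)).
Proof.
rewrite sumcE -sumrB mulr_sumr; congr (_ +i* _); apply: eq_bigr => i _.
  by case: (F i) => x y /=; ring.
by case: (F i) => x y /=; ring.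
Qed.

Definition in_cut (z0 : C) : Prop := exists t : R, t <= -1 /\ - 'i * z0 = t%:C.

Lemma in_cutP (z0 : C) : in_cut z0 <-> Re z0 = 0 /\ Im z0 <= -1.
Proof.
case: z0 => x y /=; split.
  case=> t [ht /eqP]; simpc; rewrite eq_complex /= oppr_eq0.
  by case/andP => /eqP-> /eqP.
by case=> -> hy; exists y; split => //; simpc.
Qed.

Lemma mulii : 'i * 'i = -1 :> C.
Proof. by rewrite -expr2 sqr_i. Qed.

Lemma cos_atan_gt0 (t : R) : 0 < cos (atan t).
Proof. by rewrite cos_atan invr_gt0 sqrtr_gt0; nra. Qed.

Lemma sin_atan (t : R) : sin (atan t) = t * cos (atan t).
Proof.
have := atanK t; rewrite /tan => {2}<-.
by rewrite divfK // gt_eqF // cos_atan_gt0.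
Qed.

Lemma atan_strip (t : R) : `|atan t| < pi / 2.
Proof. by rewrite ltr_norml atan_gtNpi2 atan_ltpi2. Qed.

End Hyperbolic.

Section Lorentz.
Variables (R : realType) (d : nat).
Hypothesis d_gt0 : (0 < d)%N.
Local Notation C := R[i].
Local Notation vec := (vec R d).
Local Notation i0 := (i0 d).
Local Notation i1 := (i1 d).
Local Notation Re := (@complex.Re R).
Local Notation Im := (@complex.Im R).

Lemma i1_neq0 : (i1 == i0) = false.
Proof.
apply/negbTE/eqP => /(congr1 (@nat_of_ord _)).
by rewrite /i1 inordK // ltnS.
Qed.

Lemma i0_neq1 : (i0 == i1) = false.
Proof. by rewrite eq_sym i1_neq0. Qed.

Lemma big_neq_i0 (V : nmodType) (F : 'I_d.+1 -> V) :
  \sum_(j | j != i0) F j = F i1 + \sum_(j | (j != i0) && (j != i1)) F j.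
Proof. by rewrite (bigD1 i1) ?i1_neq0. Qed.

Lemma beta_split (z w : vec) : beta z w = z i0 0 * w i0 0 - z i1 0 * w i1 0
   - \sum_(j | (j != i0) && (j != i1)) z j 0 * w j 0.
Proof. by rewrite /beta big_neq_i0 opprD addrA. Qed.

Lemma betaC (z w : vec) : beta z w = beta w z.
Proof. by rewrite /beta mulrC; congr (_ - _); apply: eq_bigr => j _; rewrite mulrC. Qed.

Lemma betaDl (x y w : vec) : beta (x + y) w = beta x w + beta y w.
Proof.
rewrite /beta (eq_bigr (fun j => x j 0 * w j 0 + y j 0 * w j 0)).
  by rewrite big_split !mxE /=; ring.
by move=> j _; rewrite !mxE mulrDl.
Qed.

Lemma betaZl (a : C) (x w : vec) : beta (a *: x) w = a * beta x w.
Proof.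
rewrite /beta (eq_bigr (fun j => a * (x j 0 * w j 0))).
  by rewrite -mulr_sumr !mxE; ring.
by move=> j _; rewrite !mxE mulrA.
Qed.

Lemma betaBl (x y w : vec) : beta (x - y) w = beta x w - beta y w.
Proof. by rewrite betaDl -scaleN1r betaZl mulN1r. Qed.

Lemma betaDr (x y w : vec) : beta w (x + y) = beta w x + beta w y.
Proof. by rewrite betaC betaDl !(betaC w). Qed.

Lemma betaZr (a : C) (x w : vec) : beta w (a *: x) = a * beta w x.
Proof. by rewrite betaC betaZl betaC. Qed.

Lemma betaBr (x y w : vec) : beta w (x - y) = beta w x - beta w y.
Proof. by rewrite betaC betaBl !(betaC w). Qed.

Lemma beta_e0r (x : vec) : beta x (e0 R d) = x i0 0.
Proof.
rewrite /beta /e0 mxE eqxx mulr1 big1 ?subr0 // => j /negbTE hj.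
by rewrite mxE hj mulr0.
Qed.

Lemma hmx_mulE (w : vec) j : (hmx R d *m w) j 0 =
  if j == i0 then w i1 0 else if j == i1 then w i0 0 else 0.
Proof.
rewrite mxE; have [->|hj0] := eqVneq j i0.
  rewrite (bigD1 i1) //= big1 ?addr0; first by rewrite mxE !eqxx mul1r.
  by move=> k /negbTE hk; rewrite mxE eqxx hk i0_neq1 mul0r.
have [->|hj1] := eqVneq j i1.
  rewrite (bigD1 i0) //= big1 ?addr0; first by rewrite mxE !eqxx i1_neq0 mul1r.
  by move=> k /negbTE hk; rewrite mxE eqxx hk i1_neq0 mul0r.
by rewrite big1 // => k _; rewrite mxE (negbTE hj0) (negbTE hj1) mul0r.
Qed.

Lemma exph_mulE (z : C) (w : vec) j : (exph d z *m w) j 0 =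
  if j == i0 then ccosh z * w i0 0 + csinh z * w i1 0
  else if j == i1 then csinh z * w i0 0 + ccosh z * w i1 0 else w j 0.
Proof.
have hw (v : vec) : hmx R d *m v =
    \col_j (if j == i0 then v i1 0 else if j == i1 then v i0 0 else 0).
  by apply/matrixP => k l; rewrite ord1 hmx_mulE mxE.
rewrite /exph !mulmxDl mul1mx -!scalemxAl -mulmxA !hw !mxE.
have [->|hj0] := eqVneq j i0; rewrite ?eqxx ?i1_neq0 ?i0_neq1 /=; first by ring.
have [->|hj1] := eqVneq j i1; rewrite ?eqxx ?i1_neq0 /=; first by ring.
by rewrite !mulr0 !addr0.
Qed.

Lemma exph0 : exph d (0 : C) = 1%:M.
Proof. by rewrite /exph ccosh0 csinh0 subrr !scale0r !addr0. Qed.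

Lemma exphD_mulmx (x y : C) (w : vec) :
  exph d (x + y) *m w = exph d x *m (exph d y *m w).
Proof.
apply/matrixP => j k; rewrite ord1 !exph_mulE eqxx i1_neq0 eqxx ccoshD csinhD.
by case: ifP => _; [|case: ifP => _]; ring.
Qed.

Lemma exph_mul_rest (z : C) (u : vec) j : j != i0 -> j != i1 ->
  (exph d z *m u) j 0 = u j 0.
Proof. by move=> /negbTE h0 /negbTE h1; rewrite exph_mulE h0 h1. Qed.

Lemma exph_beta (z : C) (u w : vec) :
  beta (exph d z *m u) (exph d z *m w) = beta u w.
Proof.
rewrite !beta_split !exph_mulE !eqxx i1_neq0.
have -> : \sum_(j | (j != i0) && (j != i1)) (exph d z *m u) j 0 * (exph d z *m w) j 0
        = \sum_(j | (j != i0) && (j != i1)) u j 0 * w j 0.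
  by apply: eq_bigr => j /andP[h0 h1]; rewrite !exph_mul_rest.
set S := \sum_(j | _) _.
transitivity ((ccosh z ^+ 2 - csinh z ^+ 2) * (u i0 0 * w i0 0 - u i1 0 * w i1 0) - S).
  by ring.
by rewrite ccosh_sqrB_csinh mul1r.
Qed.

Lemma exph_sum_rest (V : nmodType) (F : C -> V) (z : C) (u : vec) :
  \sum_(j | (j != i0) && (j != i1)) F ((exph d z *m u) j 0)
    = \sum_(j | (j != i0) && (j != i1)) F (u j 0).
Proof. by apply: eq_bigr => j /andP[h0 h1]; rewrite exph_mul_rest. Qed.

Lemma Im_exph_real_mulE (a : R) (u : vec) j : Im ((exph d a%:C *m u) j 0) =
  if j == i0 then cosh a * Im (u i0 0) + sinh a * Im (u i1 0)
  else if j == i1 then sinh a * Im (u i0 0) + cosh a * Im (u i1 0)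
  else Im (u j 0).
Proof.
rewrite exph_mulE ccosh_real csinh_real.
case: (u i0 0) => x0 y0; case: (u i1 0) => x1 y1.
by case: ifP => _; [|case: ifP => _] => //=; ring.
Qed.

Lemma Im_exph_imag_mulE (b : R) (u : vec) j : Im ((exph d ('i * b%:C) *m u) j 0) =
  if j == i0 then cos b * Im (u i0 0) + sin b * Re (u i1 0)
  else if j == i1 then sin b * Re (u i0 0) + cos b * Im (u i1 0)
  else Im (u j 0).
Proof.
rewrite exph_mulE ccosh_imag csinh_imag.
case: (u i0 0) => x0 y0; case: (u i1 0) => x1 y1.
by case: ifP => _; [|case: ifP => _] => //=; ring.
Qed.

Lemma Xiplus_boost (a : R) (w : vec) : Xiplus w -> Xiplus (exph d a%:C *m w).
Proof.
case=> hw [/= hy0 hV]; split; first by rewrite /dSC exph_beta.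
move: hV; rewrite /VplusR /= !big_neq_i0 !Im_exph_real_mulE eqxx i1_neq0 eqxx.
rewrite (exph_sum_rest (fun c => Im c ^+ 2)) => hV.
have hY : 0 <= \sum_(j | (j != i0) && (j != i1)) Im (w j 0) ^+ 2.
  by apply: sumr_ge0 => j _; apply: sqr_ge0.
have hV' : Im (w i1 0) ^+ 2 + \sum_(j | (j != i0) && (j != i1)) Im (w j 0) ^+ 2
    < Im (w i0 0) ^+ 2 by lra.
have [] := lightcone_boost (cosh_sqrB_sinh a) (cosh_gt0 a) hY hy0 hV'.
by split=> //; lra.
Qed.

Lemma Xiplus_rotation_not_cut (b : R) (w : vec) : `|b| < pi / 2 -> Xiplus w ->
  ~ in_cut ((exph d ('i * b%:C) *m w) i0 0).
Proof.
move=> hb [hw [/= hy0 hV]] /in_cutP[].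
set z := exph d ('i * b%:C) *m w.
have wE : w = exph d ('i * (- b)%:C) *m z.
  by rewrite /z -exphD_mulmx rmorphN mulrN addNr exph0 mul1mx.
have : beta z z = -1 by rewrite /z exph_beta.
move: hy0 hV; rewrite wE; clearbody z.
rewrite big_neq_i0 !Im_exph_imag_mulE eqxx i1_neq0 eqxx.
rewrite (exph_sum_rest (fun c => Im c ^+ 2)) cosN sinN beta_split sumc_mulE.
have := sqr_sum_mul_le (fun j => (j != i0) && (j != i1))
  (fun j => Re (z j 0)) (fun j => Im (z j 0)).
have hX : 0 <= \sum_(j | (j != i0) && (j != i1)) Re (z j 0) ^+ 2.
  by apply: sumr_ge0 => j _; apply: sqr_ge0.
have hY : 0 <= \sum_(j | (j != i0) && (j != i1)) Im (z j 0) ^+ 2.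
  by apply: sumr_ge0 => j _; apply: sqr_ge0.
move: hX hY.
set X := \sum_(j | _) Re (z j 0) ^+ 2; set Y := \sum_(j | _) Im (z j 0) ^+ 2.
set P := \sum_(j | _) Re (z j 0) * Im (z j 0).
case: (z i0 0) => x0 t; case: (z i1 0) => p q /= hX hY hCS hy0 hV.
move/eqP; simpc; rewrite eq_complex /= => /andP[/eqP hre /eqP him] x0_0 ht.
have hc : 0 < cos b by apply: cos_gt0_pihalf; rewrite -ltr_norml.
rewrite x0_0 in hre him hV.
by apply: (rotation_cut_absurd (p := p) (q := q) (cos2Dsin2 b) hc ht hX hY hCS); lra.
Qed.

Definition lower (x : vec) : vec := \col_j (if j == i0 then x j 0 else - x j 0).

Definition reflection (x : vec) : 'M[C]_d.+1 :=
  1%:M + x *m (- (2 / beta x x) *: (lower x)^T).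

Lemma lower_mul (x y : vec) : ((lower x)^T *m y) 0 0 = beta y x.
Proof.
rewrite mxE /beta (bigD1 i0) //= !mxE eqxx mulrC; congr (_ + _).
by rewrite -sumrN; apply: eq_bigr => j hj; rewrite !mxE (negbTE hj) mulNr mulrC.
Qed.

Lemma reflection_mul (x y : vec) :
  reflection x *m y = y + (- (2 / beta x x) * beta y x) *: x.
Proof.
rewrite /reflection mulmxDl mul1mx -mulmxA -scalemxAl -scalemxAr [_ *m y]mx11_scalar.
by rewrite lower_mul mul_mx_scalar scalerA.
Qed.

Lemma reflection_beta (x y w : vec) : beta x x != 0 ->
  beta (reflection x *m y) (reflection x *m w) = beta y w.
Proof.
move=> hx; rewrite !reflection_mul !betaDl !betaDr !betaZl !betaZr (betaC x w).
by field.
Qed.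

Lemma det_reflection (x : vec) : beta x x != 0 -> \det (reflection x) = -1.
Proof. by move=> hx; rewrite det_1_add_mul -scalemxAl mxE lower_mul; field. Qed.

Lemma reflection_e0 (x : vec) : x i0 0 = 0 -> reflection x *m e0 R d = e0 R d.
Proof.
by move=> hx; rewrite reflection_mul betaC beta_e0r hx mulr0 scale0r addr0.
Qed.

Lemma reflection_swap (u z : vec) : beta u u = beta z z ->
  beta (u - z) (u - z) != 0 -> reflection (u - z) *m u = z.
Proof.
move=> huz hx; rewrite reflection_mul.
have e1 : beta (u - z) (u - z) = 2 * (beta u u - beta u z).
  by rewrite betaBl !betaBr huz (betaC z u); ring.
have hne : beta u u - beta u z != 0.
  by apply: contra hx; rewrite e1 => /eqP->; rewrite mulr0.
have -> : - (2 / beta (u - z) (u - z)) * beta u (u - z) = -1.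
  by rewrite e1 betaBr; field.
by rewrite scaleN1r opprB addrC subrK.
Qed.

Lemma KC1 : KC (1%:M : 'M[C]_d.+1).
Proof. by split; [split=> [|z w]; rewrite ?det1 ?mul1mx | rewrite mul1mx]. Qed.

Lemma KC_mul_reflections (x y : vec) : beta x x != 0 -> beta y y != 0 ->
  x i0 0 = 0 -> y i0 0 = 0 -> KC (reflection x *m reflection y).
Proof.
move=> hx hy hx0 hy0; split; [split|].
- by rewrite det_mulmx !det_reflection // mulrNN mulr1.
- by move=> z w; rewrite -!mulmxA !reflection_beta.
- by rewrite -mulmxA !reflection_e0.
Qed.

Lemma KC_mulmx_i0 (k : 'M[C]_d.+1) (x : vec) : KC k -> (k *m x) i0 0 = x i0 0.
Proof. by case=> [[_ hk] he]; have := hk x (e0 R d); rewrite he !beta_e0r. Qed.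

Lemma KC_transport (u m z : vec) : u i0 0 = m i0 0 -> m i0 0 = z i0 0 ->
  beta u u = beta m m -> beta m m = beta z z ->
  beta (u - m) (u - m) != 0 -> beta (m - z) (m - z) != 0 ->
  exists2 k, KC k & k *m u = z.
Proof.
move=> hum hmz bum bmz hx hy.
exists (reflection (m - z) *m reflection (u - m)).
  by apply: KC_mul_reflections; rewrite // !mxE ?hum ?hmz subrr.
by rewrite -mulmxA !reflection_swap.
Qed.

Definition XiA_Xiplus (u : vec) : Prop :=
  exists a w, XiAC a /\ Xiplus w /\ a *m w = u.

Lemma dScut_KC_mulmx (k : 'M[C]_d.+1) (u : vec) :
  KC k -> XiA_Xiplus u -> dScut (k *m u).
Proof. by move=> hk [a [w [ha [hw <-]]]]; exists k, a, w. Qed.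

Lemma XiA_Xiplus_rotation (b : R) (u : vec) : `|b| < pi / 2 ->
  Xiplus (exph d ('i * b%:C) *m u) -> XiA_Xiplus u.
Proof.
move=> hb hw; exists (exph d ('i * (- b)%:C)), (exph d ('i * b%:C) *m u).
split; last split=> //.
  by exists ('i * (- b)%:C); split=> //; rewrite /stripS /= mul0r mul1r add0r normrN.
by have := exphD_mulmx ('i * (- b)%:C) ('i * b%:C) u; rewrite rmorphN mulrN addNr exph0 mul1mx.
Qed.

Lemma dScut_sub (z : vec) : dScut z -> dScut_rhs z.
Proof.
case=> k [a [w [hk [[zeta [hzeta ->]] [hw ->]]]]]; split.
  by case: hk => [[_ hk] _]; rewrite /dSC hk exph_beta; case: hw.
have -> : exph d zeta *m w
        = exph d ('i * (Im zeta)%:C) *m (exph d (Re zeta)%:C *m w).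
  by rewrite -exphD_mulmx addrC -complexE.
by rewrite KC_mulmx_i0 //; apply/Xiplus_rotation_not_cut/Xiplus_boost.
Qed.

Definition plane_vec (a b : C) : vec :=
  \col_j (if j == i0 then a else if j == i1 then b else 0).

Lemma beta_plane_vecl (a b : C) (v : vec) :
  beta (plane_vec a b) v = a * v i0 0 - b * v i1 0.
Proof.
rewrite beta_split !mxE eqxx i1_neq0 eqxx big1 ?subr0 //.
by move=> j /andP[/negbTE h0 /negbTE h1]; rewrite mxE h0 h1 mul0r.
Qed.

Lemma XiA_Xiplus_plane (a b : C) : a ^+ 2 - b ^+ 2 = -1 -> ~ in_cut a ->
  XiA_Xiplus (plane_vec a b).
Proof.
move=> hab hcut.
have [t [ht1 ht2]] : exists t,
    0 < Im a + t * Re b /\ (Im b + t * Re a) ^+ 2 < (Im a + t * Re b) ^+ 2.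
  move: hab hcut; rewrite in_cutP; case: a => X Y; case: b => P Q /=.
  move/eqP; simpc; rewrite eq_complex /= => /andP[/eqP hre /eqP him] hcut.
  by apply: plane_slope => //; lra.
apply: (XiA_Xiplus_rotation (atan_strip t)); split.
  by rewrite /dSC exph_beta beta_plane_vecl !mxE eqxx i1_neq0 eqxx -!expr2.
rewrite /VplusR /= big_neq_i0 !Im_exph_imag_mulE eqxx i1_neq0 eqxx.
rewrite (exph_sum_rest (fun c => Im c ^+ 2)) big1 => [|j /andP[/negbTE h0 /negbTE h1]];
  last by rewrite mxE h0 h1 /= expr0n.
rewrite !mxE eqxx i1_neq0 eqxx addr0 sin_atan.
have hc := cos_atan_gt0 t; set c := cos (atan t).
have -> : c * Im a + t * c * Re b = c * (Im a + t * Re b) by ring.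
have -> : t * c * Re a + c * Im b = c * (Im b + t * Re a) by ring.
rewrite !exprMn -mulrBr; split; apply: mulr_gt0 => //.
  exact: exprn_gt0.
by rewrite subr_gt0.
Qed.

Lemma dScut_nonisotropic (z : vec) : dSC z -> ~ in_cut (z i0 0) ->
  \sum_(j | j != i0) z j 0 * z j 0 != 0 -> dScut z.
Proof.
rewrite /dSC; set q := \sum_(j | j != i0) _ => hz hcut q_neq0.
have hq : q = z i0 0 ^+ 2 + 1 by rewrite expr2 -[1]opprK -hz /beta -/q; ring.
pose r := sqrtc q.
pose u1 := if r * z i1 0 + q != 0 then r else - r.
have hu1 : u1 * u1 = q by rewrite -expr2 /u1; case: ifP => _; rewrite ?sqrrN sqr_sqrtc.
have hz0 : z i0 0 * z i0 0 = q - 1 by rewrite -expr2 hq addrK.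
have hu1z : u1 * z i1 0 + q != 0.
  rewrite /u1; case: ifP => // /negbFE/eqP hrz.
  have -> : - r * z i1 0 + q = 2 * q.
    by rewrite mulNr -[r * _](addrK q) hrz sub0r opprK -mulr2n mulr_natl.
  by rewrite mulf_neq0 // pnatr_eq0.
set u := plane_vec (z i0 0) u1; set m := plane_vec (z i0 0) (- u1).
have bu (v : vec) : beta u v = z i0 0 * v i0 0 - u1 * v i1 0 by rewrite beta_plane_vecl.
have bm (v : vec) : beta m v = z i0 0 * v i0 0 + u1 * v i1 0.
  by rewrite beta_plane_vecl mulNr opprK.
have ui0 : u i0 0 = z i0 0 by rewrite mxE eqxx.
have mi0 : m i0 0 = z i0 0 by rewrite mxE eqxx.
have ui1 : u i1 0 = u1 by rewrite mxE i1_neq0 eqxx.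
have mi1 : m i1 0 = - u1 by rewrite mxE i1_neq0 eqxx.
have buu : beta u u = -1 by rewrite bu ui0 ui1 hu1 hz0; ring.
have bmm : beta m m = -1 by rewrite bm mi0 mi1 mulrN hu1 hz0; ring.
have [k hk <-] : exists2 k, KC k & k *m u = z.
  apply: (KC_transport (m := m)); rewrite ?ui0 ?mi0 ?buu ?bmm //.
  - have -> : beta (u - m) (u - m) = - 4 * q.
      by rewrite betaBl !betaBr !bu !bm ui0 ui1 mi0 mi1 -hu1; ring.
    by rewrite mulf_neq0 // oppr_eq0 pnatr_eq0.
  - have -> : beta (m - z) (m - z) = - 2 * (u1 * z i1 0 + q).
      by rewrite betaBl !betaBr !bm (betaC z m) bm hz mi0 mi1 mulrN hu1 hz0; ring.
    by rewrite mulf_neq0 // oppr_eq0 pnatr_eq0.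
apply: dScut_KC_mulmx hk _; apply: XiA_Xiplus_plane => //.
by rewrite !expr2 hu1 hz0; ring.
Qed.

Lemma big_rest1 (V : nmodType) (F : 'I_d.+1 -> V) (p : 'I_d.+1) :
  p != i0 -> p != i1 -> (forall j, j != i0 -> j != i1 -> j != p -> F j = 0) ->
  \sum_(j | (j != i0) && (j != i1)) F j = F p.
Proof.
move=> hp0 hp1 hF; rewrite (bigD1 p) ?hp0 ?hp1 //= big1 ?addr0 //.
by move=> j /andP[/andP[h0 h1] h2]; apply: hF.
Qed.

Definition isotropic_witness (p : 'I_d.+1) (e : R) : vec :=
  \col_j (if j == i0 then 'i%R else if j == i1 then (2^-1 : R)%:C
          else if j == p then e%:C * 'i * (2^-1 : R)%:C else 0).

Lemma beta_isotropic_witnessl (p : 'I_d.+1) (e : R) (v : vec) : p != i0 -> p != i1 ->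
  beta (isotropic_witness p e) v
    = 'i * v i0 0 - (2^-1 : R)%:C * (v i1 0 + e%:C * 'i * v p 0).
Proof.
move=> hp0 hp1; rewrite /beta big_neq_i0 (big_rest1 hp0 hp1) => [|j h0 h1 hj].
  by rewrite !mxE eqxx i1_neq0 eqxx (negbTE hp0) (negbTE hp1) eqxx; ring.
by rewrite mxE (negbTE h0) (negbTE h1) (negbTE hj) mul0r.
Qed.

Lemma Xiplus_isotropic_witness (p : 'I_d.+1) (e : R) : p != i0 -> p != i1 ->
  e ^+ 2 = 1 -> Xiplus (isotropic_witness p e).
Proof.
move=> hp0 hp1 e2; split.
  rewrite /dSC beta_isotropic_witnessl // !mxE eqxx i1_neq0 eqxx.
  rewrite (negbTE hp0) (negbTE hp1) eqxx; set h := (2^-1 : R)%:C.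
  transitivity ('i * 'i - h * h * (1 + e%:C * e%:C * ('i * 'i))); first by ring.
  have ee : e%:C * e%:C = 1 by rewrite -rmorphM -expr2 e2.
  by rewrite ee mulii; ring.
rewrite /VplusR /= big_neq_i0 (big_rest1 hp0 hp1) => [|j h0 h1 hj]; last first.
  by rewrite mxE (negbTE h0) (negbTE h1) (negbTE hj) /= expr0n.
rewrite !mxE eqxx i1_neq0 eqxx (negbTE hp0) (negbTE hp1) eqxx; simpc.
have -> : Im 'i%R = 1 by [].
by rewrite /= expr0n /= expr_div_n e2; split; lra.
Qed.

Definition conj_point (z : vec) : vec := \col_j (if j == i0 then 'i%R else (z j 0)^*).

Lemma beta_conj_pointl (z v : vec) :
  beta (conj_point z) v = 'i * v i0 0 - \sum_(j | j != i0) (z j 0)^* * v j 0.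
Proof.
rewrite /beta mxE eqxx; congr (_ - _).
by apply: eq_bigr => j hj; rewrite mxE (negbTE hj).
Qed.

Lemma dScut_isotropic (z : vec) (p : 'I_d.+1) : dSC z -> z i0 0 = 'i%R ->
  p != i0 -> p != i1 -> z p 0 != 0 -> dScut z.
Proof.
move=> hz z0_i hp0 hp1 zp_neq0.
have q0 : \sum_(j | j != i0) z j 0 * z j 0 = 0.
  move: hz; rewrite /dSC /beta z0_i mulii => /(congr1 (fun x => -1 - x)).
  by rewrite opprB addrC subrK subrr.
set S := (z i1 0)^* + 'i * (z p 0)^*.
pose e : R := if S == 0 then -1 else 1.
have e2 : e ^+ 2 = 1 by rewrite /e; case: ifP => _; rewrite ?sqrrN expr1n.
have Se_neq0 : (z i1 0)^* + e%:C * 'i * (z p 0)^* != 0.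
  rewrite /e; case: ifP => [/eqP S0|/negbT]; last by rewrite mul1r.
  have -> : (z i1 0)^* + (-1)%:C * 'i * (z p 0)^* = S - 2 * 'i * (z p 0)^*.
    by rewrite /S rmorphN1; ring.
  by rewrite S0 sub0r oppr_eq0 !mulf_neq0 ?pnatr_eq0 ?conjc_eq0 ?neq0Ci.
set u := isotropic_witness p e; set m := conj_point z.
have [hu _] := Xiplus_isotropic_witness hp0 hp1 e2; rewrite -/u in hu.
have bmm : beta m m = -1.
  rewrite beta_conj_pointl mxE eqxx mulii.
  have -> : \sum_(j | j != i0) (z j 0)^* * m j 0 = (\sum_(j | j != i0) z j 0 * z j 0)^*.
    by rewrite rmorph_sum; apply: eq_bigr => j hj; rewrite mxE (negbTE hj) rmorphM.
  by rewrite q0 conjc0 subr0.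
set N := \sum_(j | j != i0) (z j 0)^* * z j 0.
have N_neq0 : N != 0.
  have ge0 j : 0 <= (z j 0)^* * z j 0 by rewrite mulrC mulcJ_ge0.
  apply: contra zp_neq0 => /eqP/(psumr_eq0P (fun j _ => ge0 j))/(_ p hp0)/eqP.
  by rewrite mulf_eq0 conjc_eq0 orbb.
have [k hk <-] : exists2 k, KC k & k *m u = z.
  apply: (KC_transport (m := m)); rewrite ?mxE ?eqxx ?z0_i ?hu ?bmm //.
  - have -> : beta (u - m) (u - m)
        = 2 * (2^-1 : R)%:C * ((z i1 0)^* + e%:C * 'i * (z p 0)^*).
      rewrite betaBl !betaBr (betaC m u) hu bmm beta_isotropic_witnessl //.
      by rewrite !mxE eqxx i1_neq0 (negbTE hp0) mulii; ring.
    rewrite !mulf_neq0 ?pnatr_eq0 //; simpc.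
    by rewrite eq_complex /= invr_eq0 pnatr_eq0.
  - have -> : beta (m - z) (m - z) = 2 * N.
      by rewrite betaBl !betaBr (betaC z m) bmm hz beta_conj_pointl z0_i mulii -/N; ring.
    by rewrite mulf_neq0 ?pnatr_eq0.
apply: dScut_KC_mulmx hk _.
have b0 : `|0 : R| < pi / 2 by rewrite normr0 divr_gt0 ?pi_gt0.
apply: (XiA_Xiplus_rotation b0); rewrite rmorph0 mulr0 exph0 mul1mx.
exact: Xiplus_isotropic_witness.
Qed.

Lemma dScut_sup (z : vec) : dScut_rhs z -> dScut z.
Proof.
case=> hz hcut.
have [q0|q_neq0] := eqVneq (\sum_(j | j != i0) z j 0 * z j 0) 0; last first.
  exact: dScut_nonisotropic.
have z0_i : z i0 0 = 'i%R.
  have : (z i0 0 - 'i) * (z i0 0 + 'i) = 0.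
    have zz : z i0 0 * z i0 0 = -1 by move: hz; rewrite /dSC /beta q0 subr0.
    by transitivity (z i0 0 * z i0 0 - 'i * 'i); [ring | rewrite zz mulii subrr].
  move/eqP; rewrite mulf_eq0 => /orP[/eqP/subr0_eq // | /eqP z0E].
  exfalso; apply: hcut; exists (-1); split=> //.
  have -> : z i0 0 = - 'i by apply/eqP; rewrite -subr_eq0 opprK z0E.
  by rewrite mulrNN mulii rmorphN1.
case: (boolP [exists j, (j != i0) && (j != i1) && (z j 0 != 0)]).
  case/existsP=> p /andP[/andP[hp0 hp1] zp_neq0].
  exact: (dScut_isotropic hz z0_i hp0 hp1 zp_neq0).
move/existsPn=> z_rest.
have rest0 j : j != i0 -> j != i1 -> z j 0 = 0.
  by move=> h0 h1; apply/eqP; move: (z_rest j); rewrite h0 h1 negbK.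
have z1_0 : z i1 0 = 0.
  move: q0; rewrite big_neq_i0 big1 ?addr0 => [/eqP|j /andP[h0 h1]].
    by rewrite mulf_eq0 orbb => /eqP.
  by rewrite rest0 ?mul0r.
have -> : z = plane_vec 'i%R 0.
  apply/matrixP => j k; rewrite ord1 mxE.
  by case: eqP => [->|/eqP h0] //; case: eqP => [->|/eqP h1] //; apply: rest0.
rewrite -[plane_vec _ _]mul1mx; apply: dScut_KC_mulmx KC1 _.
apply: XiA_Xiplus_plane; first by rewrite expr2 mulii expr0n subr0.
by rewrite -z0_i.
Qed.

End Lorentz.

Theorem mainTheorem3 (R : realType) (d : nat) (hd : (1 <= d)%N) :
  forall z : vec R d, dScut z <-> dScut_rhs z.
Proof. by move=> z; split; [exact: dScut_sub | exact: dScut_sup]. Qed.
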